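(* Let $\{a_n\}_{n=1}^\infty\subset(0,1]$ and define $P_n,Q_n:\{-1,1\}^n\to\mathbb{R}$ by $P_0\equiv Q_0\equiv 1$ and \[ P_{n+1}=P_n+\varepsilon_{n+1}a_{n+1}Q_n,\qquad Q_{n+1}=\varepsilon_{n+1}a_{n+1}P_n-Q_n,\qquad n=0,1,\dots \] Then for each $n=1,2,\dots$, \[ H(\hat P_n^2)=H(\hat Q_n^2)=-\sum_{i=1}^n\Big(\prod_{1\le j\le n,\ j\ne i}(1+a_j^2)\Big)a_i^2\log a_i^2. \]
   Context: Here $\varepsilon_i$ denotes the $i$-th coordinate function $\varepsilon_i(\delta_1,\dots,\delta_m)=\delta_i$ on $\{-1,1\}^m$ for $m\ge i$ (functions on $\{-1,1\}^n$ are regarded as functions on $\{-1,1\}^{n+1}$ not depending on the last coordinate). For $A\subseteq[n]$, $W_A=\prod_{i\in A}\varepsilon_i$ and, for $g:\{-1,1\}^n\to\mathbb{R}$, $\hat g(A)=2^{-n}\sum_{\delta\in\{-1,1\}^n}g(\delta)W_A(\delta)$. The (Fourier) entropy of $g$, defined also for non-normalized $g$, is $H(\hat g^2)=-\sum_{A\subseteq[n]}\hat g(A)^2\log\hat g(A)^2$ with $0\log 0=0$; logarithms are to base $2$. *)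

From HB Require Import structures.
From mathcomp Require Import all_boot all_order all_algebra.
From mathcomp Require Import reals exp.
Set Implicit Arguments. Unset Strict Implicit. Unset Printing Implicit Defensive.
Import Order.TTheory GRing.Theory Num.Theory.
Local Open Scope ring_scope.

Section Defs.
Variable R : realType.

Definition log2 (x : R) : R := ln x / ln 2.

Definition xlogx (x : R) : R := if x == 0 then 0 else x * log2 x.

(* A point of {-1,1}^m is encoded by a boolean vector; [sgn b] is the
   corresponding sign (false |-> 1, true |-> -1). *)
Definition sgn (b : bool) : R := if b then -1 else 1.

(* Infinite boolean sequences d : nat -> bool; coordinate k (0-based)
   gives epsilon_{k+1} = sgn (d k).  The pair (P_n, Q_n) as functions of d
   (they depend only on d 0, ..., d (n-1)). *)
Fixpoint PQ (a : nat -> R) (n : nat) (d : nat -> bool) : R * R :=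
  match n with
  | 0 => (1, 1)
  | m.+1 => let pq := PQ a m d in
            (pq.1 + sgn (d m) * a m.+1 * pq.2,
             sgn (d m) * a m.+1 * pq.1 - pq.2)
  end.

Definition ext (n : nat) (delta : {ffun 'I_n -> bool}) : nat -> bool :=
  fun k => if @insub nat (fun k => k < n)%N 'I_n k is Some i then delta i else false.

Definition Pfun (a : nat -> R) (n : nat) (delta : {ffun 'I_n -> bool}) : R :=
  (PQ a n (ext delta)).1.
Definition Qfun (a : nat -> R) (n : nat) (delta : {ffun 'I_n -> bool}) : R :=
  (PQ a n (ext delta)).2.

Definition walsh (n : nat) (A : {set 'I_n}) (delta : {ffun 'I_n -> bool}) : R :=
  \prod_(i in A) sgn (delta i).

Definition fourier (n : nat) (g : {ffun 'I_n -> bool} -> R) (A : {set 'I_n}) : R :=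
  ((2 : R) ^+ n)^-1 * \sum_(delta : {ffun 'I_n -> bool}) g delta * walsh A delta.

Definition fentropy (n : nat) (g : {ffun 'I_n -> bool} -> R) : R :=
  - \sum_(A : {set 'I_n}) xlogx (fourier g A ^+ 2).

End Defs.

(* Expanding (P_m, Q_m) in the Walsh basis, the recursion shows that both
   functions have, at every A ⊆ [n], a Walsh coefficient equal to
   ± prod_{i in A} a_i: adjoining coordinate m+1 keeps the coefficients of the
   sets avoiding it (up to sign) and produces those of the sets containing it
   as a_{m+1} times a coefficient of the other function.  Hence both squared
   spectra are the product weights A |-> prod_{i in A} x_i with x_i = a_i^2,
   whose entropy is computed termwise: log of a product is the sum of the
   logs, and sum_{A ∋ i} prod_{j in A} x_j = x_i prod_{j <> i} (1 + x_j). *)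

From HB Require Import structures.
From mathcomp Require Import all_boot all_order all_algebra.
From mathcomp Require Import reals exp ring.
Set Implicit Arguments. Unset Strict Implicit. Unset Printing Implicit Defensive.
Import Order.TTheory GRing.Theory Num.Theory.
Local Open Scope ring_scope.

Lemma big_subset_setU1 (R : Type) (idx : R) (op : Monoid.com_law idx) (I : finType)
    (i : I) (L : {set I}) (F : {set I} -> R) :
  i \notin L ->
  \big[op/idx]_(B : {set I} | B \subset i |: L) F B =
  op (\big[op/idx]_(B : {set I} | B \subset L) F B)
     (\big[op/idx]_(B : {set I} | B \subset L) F (i |: B)).
Proof.
move=> iNL; rewrite (bigID (fun B : {set I} => i \in B)) /= Monoid.mulmC.
congr (op _ _).
  apply: eq_bigl => B; apply/andP/subsetP => [[/subsetP sBiL iNB] j jB|sBL].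
    by have /setU1P[ji|//] := sBiL j jB; move: iNB; rewrite -ji jB.
  split; last exact: contra (sBL i) iNL.
  by apply/subsetP => j /sBL; apply: setU1r.
rewrite (reindex_onto (fun B => i |: B) (fun B => B :\ i)) /=; last first.
  by move=> B /andP[_ iB]; rewrite setD1K.
apply: eq_bigl => B; rewrite setU11 andbT.
apply/andP/idP => [[sUB /eqP <-]|sBL]; first by rewrite -(setU1K iNL) setSD.
by rewrite setUS // setU1K // (contra (subsetP sBL i)).
Qed.

Lemma sum_prod_set_mem (R : comNzRingType) (I : finType) (x : I -> R) (i : I) :
  \sum_(A : {set I} | i \in A) \prod_(j in A) x j = x i * \prod_(j | j != i) (1 + x j).
Proof.
(* Expand prod_j (x_j + [j != i]): a set avoiding i picks the factor 0. *)
have := @bigA_distr R 0 1 *%R +%R I x (fun j => (j != i)%:R).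
rewrite (bigD1 i) //= eqxx addr0 (eq_bigr (fun j => 1 + x j)); last first.
  by move=> j /negbTE->; rewrite addrC.
move=> ->.
rewrite [RHS](bigID (fun A : {set I} => i \in A)) /=.
rewrite [X in _ + X]big1 ?addr0 => [|A iA].
  apply: eq_bigr => A iA; rewrite big_mkcond; apply: eq_bigr => j _.
  by case: ifPn => // jA; case: eqVneq jA => // ->; rewrite iA.
by rewrite (bigD1 i) //= (negbTE iA) eqxx mul0r.
Qed.

Section Walsh.
Variables (R : realType) (n : nat).
Implicit Types (A B : {set 'I_n}) (d : {ffun 'I_n -> bool}).

Lemma sum_walshM A B :
  \sum_d walsh R B d * walsh R A d = if B == A then 2 ^+ n else 0.
Proof.
transitivity (\prod_i \sum_(b : bool)
    (if i \in B then sgn R b else 1) * (if i \in A then sgn R b else 1)).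
  rewrite bigA_distr_bigA; apply: eq_bigr => d _.
  by rewrite big_split /= -!big_mkcond.
have sgnK (b : bool) : sgn R b * sgn R b = 1 by case: b; rewrite /sgn ?mulrNN mulr1.
case: eqVneq => [->|neq_BA].
  rewrite (eq_bigr (fun=> 2)) ?prodr_const ?card_ord // => i _.
  by rewrite big_bool; case: (i \in A); rewrite ?sgnK ?mulr1.
have [i neq_i] : exists i, (i \in B) != (i \in A).
  apply/existsP; apply: contra_neqT neq_BA => /existsPn eq_BA.
  by apply/setP => i; apply/eqP; rewrite -[_ == _]negbK eq_BA.
rewrite (bigD1 i) //= big_bool /=; move: neq_i.
by case: (i \in B); case: (i \in A) => //= _; rewrite /sgn /= ?mulr1 ?mul1r addNr mul0r.
Qed.

Lemma fourier_sum_walsh (g : {ffun 'I_n -> bool} -> R) (c : {set 'I_n} -> R) :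
  (forall d, g d = \sum_B c B * walsh R B d) -> fourier g =1 c.
Proof.
move=> g_walsh A.
rewrite /fourier (eq_bigr (fun d => \sum_B c B * (walsh R B d * walsh R A d))).
  rewrite exchange_big /=.
  under eq_bigr => B _ do rewrite -big_distrr /= sum_walshM.
  rewrite (bigD1 A) //= eqxx big1 ?addr0 => [|B /negbTE->]; last by rewrite mulr0.
  by rewrite mulrCA mulVf ?mulr1 // expf_neq0 // pnatr_eq0.
by move=> d _; rewrite g_walsh big_distrl; apply: eq_bigr => B _; rewrite mulrA.
Qed.

End Walsh.

Section ProductEntropy.
Variables (R : realType) (I : finType) (x : I -> R).
Hypothesis x_gt0 : forall i, 0 < x i.

Lemma log2_prod (A : {set I}) : log2 (\prod_(i in A) x i) = \sum_(i in A) log2 (x i).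
Proof.
suff [] : 0 < \prod_(i in A) x i /\
          log2 (\prod_(i in A) x i) = \sum_(i in A) log2 (x i) by [].
apply: (big_ind2 (fun u v => 0 < u /\ log2 u = v)) => //.
  by rewrite /log2 ln1 mul0r.
move=> u1 v1 u2 v2 [u1_gt0 <-] [u2_gt0 <-].
by split; [exact: mulr_gt0 | rewrite /log2 lnM ?mulrDl].
Qed.

Lemma sum_xlogx_prod_set :
  \sum_(A : {set I}) xlogx (\prod_(i in A) x i) =
  \sum_i (\prod_(j | j != i) (1 + x j)) * (x i * log2 (x i)).
Proof.
have xlogx_prod (A : {set I}) :
    xlogx (\prod_(i in A) x i) = \sum_(i in A) \prod_(j in A) x j * log2 (x i).
  have prod_gt0 : 0 < \prod_(i in A) x i by apply: prodr_gt0 => i _.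
  by rewrite /xlogx gt_eqF // log2_prod big_distrr.
under eq_bigr => A _ do rewrite xlogx_prod big_mkcond.
rewrite exchange_big; apply: eq_bigr => i _.
by rewrite -big_mkcond -big_distrl sum_prod_set_mem /= -mulrA mulrCA.
Qed.

End ProductEntropy.

Section Coefficients.
Variables (R : realType) (a : nat -> R).

(* [coefPQ m b] is the pair of Walsh coefficients of (P_m, Q_m) at the set of
   coordinates {k < m | b k}; coordinates are 0-based, so k carries a_(k+1). *)
Fixpoint coefPQ (m : nat) (b : pred nat) : R * R :=
  match m with
  | 0 => (1, 1)
  | m.+1 => let c := coefPQ m b in
            if b m then (a m.+1 * c.2, a m.+1 * c.1) else (c.1, - c.2)
  end.

Lemma eq_coefPQ m (b b' : pred nat) :
  (forall k, (k < m)%N -> b k = b' k) -> coefPQ m b = coefPQ m b'.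
Proof.
elim: m => [//|m IH] eq_bb' /=.
by rewrite IH => [|k lt_km]; rewrite eq_bb' // ltnS ltnW.
Qed.

Lemma coefPQ_sqr m (b : pred nat) :
  (coefPQ m b).1 ^+ 2 = \prod_(k < m | b k) a k.+1 ^+ 2 /\
  (coefPQ m b).2 ^+ 2 = \prod_(k < m | b k) a k.+1 ^+ 2.
Proof.
elim: m => [|m [IH1 IH2]]; first by rewrite big_ord0 expr1n.
rewrite big_mkcond big_ord_recr -big_mkcond /=.
by case: (b m); rewrite /= ?sqrrN ?mulr1 // !exprMn IH1 IH2 mulrC.
Qed.

End Coefficients.

Section Expansion.
Variables (R : realType) (a : nat -> R) (n : nat).
Implicit Types (B : {set 'I_n}) (d : {ffun 'I_n -> bool}) (i : 'I_n) (m k : nat).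

Definition set_nat B : pred nat := [pred k | [exists i in B, val i == k]].

Definition set_lt m : {set 'I_n} := [set i : 'I_n | (i < m)%N].

Lemma set_natE B i : set_nat B (val i) = (i \in B).
Proof.
apply/existsP/idP => [[j /andP[jB /eqP/val_inj <-]] //|iB].
by exists i; rewrite iB eqxx.
Qed.

Lemma set_nat_setU1 B i k : set_nat (i |: B) k = (val i == k) || set_nat B k.
Proof.
apply/existsP/orP => [[j /andP[/setU1P[-> ->|jB jk]]]|[ik|/existsP[j /andP[jB jk]]]].
- by left.
- by right; apply/existsP; exists j; rewrite jB.
- by exists i; rewrite setU11.
- by exists j; rewrite setU1r.
Qed.

Lemma coefPQ_S_notin m B : B \subset set_lt m ->
  coefPQ a m.+1 (set_nat B) =
  ((coefPQ a m (set_nat B)).1, - (coefPQ a m (set_nat B)).2).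
Proof.
move=> sBm /=; case: ifPn => // /existsP[i /andP[/(subsetP sBm)]].
by rewrite inE => lt_im /eqP eq_im; rewrite eq_im ltnn in lt_im.
Qed.

Lemma coefPQ_S_setU1 B i :
  coefPQ a (val i).+1 (set_nat (i |: B)) =
  (a (val i).+1 * (coefPQ a i (set_nat B)).2,
   a (val i).+1 * (coefPQ a i (set_nat B)).1).
Proof.
rewrite /= set_natE setU11.
by rewrite (@eq_coefPQ _ a i _ (set_nat B)) // => k lt_ki; rewrite set_nat_setU1 gtn_eqF.
Qed.

Lemma ext_ord d i : ext d i = d i.
Proof. by rewrite /ext valK. Qed.

Lemma PQ_walsh_expansion m d : (m <= n)%N ->
  PQ a m (ext d) =
  (\sum_(B : {set 'I_n} | B \subset set_lt m)
     (coefPQ a m (set_nat B)).1 * walsh R B d,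
   \sum_(B : {set 'I_n} | B \subset set_lt m)
     (coefPQ a m (set_nat B)).2 * walsh R B d).
Proof.
elim: m => [_|m IH lt_mn].
  have -> : set_lt 0 = set0 by apply/setP => i; rewrite !inE.
  by rewrite /= !(big_pred1 set0 (@subset0 _)) /walsh big_set0 !mulr1.
pose i := Ordinal lt_mn.
have set_ltS : set_lt m.+1 = i |: set_lt m.
  by apply/setP => j; rewrite !inE ltnS leq_eqVlt.
have iNlt : i \notin set_lt m by rewrite inE ltnn.
have walshU1 B : B \subset set_lt m -> walsh R (i |: B) d = sgn R (d i) * walsh R B d.
  by move=> sBm; rewrite /walsh big_setU1 //= (contra (subsetP sBm i)).
have sum_split (F : {set 'I_n} -> R) :
    \sum_(B : {set 'I_n} | B \subset set_lt m.+1) F B =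
    \sum_(B : {set 'I_n} | B \subset set_lt m) F B +
    \sum_(B : {set 'I_n} | B \subset set_lt m) F (i |: B).
  by rewrite set_ltS big_subset_setU1.
(* Naming the sums keeps [/=] from unfolding them, which is very slow. *)
pose S1 := \sum_(B : {set 'I_n} | B \subset set_lt m)
  (coefPQ a m (set_nat B)).1 * walsh R B d.
pose S2 := \sum_(B : {set 'I_n} | B \subset set_lt m)
  (coefPQ a m (set_nat B)).2 * walsh R B d.
have -> : PQ a m.+1 (ext d) =
    (S1 + sgn R (d i) * a m.+1 * S2, sgn R (d i) * a m.+1 * S1 - S2).
  by rewrite /= -(ext_ord d i) IH //; apply: ltnW.
rewrite [X in _ = (X, _)]sum_split [X in _ = (_, X)]sum_split {}/S1 {}/S2.
congr (_, _); last rewrite addrC; congr (_ + _).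
- by apply: eq_bigr => B sBm; rewrite coefPQ_S_notin.
- rewrite big_distrr; apply: eq_bigr => B sBm.
  by rewrite (coefPQ_S_setU1 B i) (walshU1 _ sBm) /=; ring.
- by rewrite -sumrN; apply: eq_bigr => B sBm; rewrite coefPQ_S_notin // mulNr.
- rewrite big_distrr; apply: eq_bigr => B sBm.
  by rewrite (coefPQ_S_setU1 B i) (walshU1 _ sBm) /=; ring.
Qed.

Lemma fourier_PQ (A : {set 'I_n}) :
  fourier (@Pfun R a n) A = (coefPQ a n (set_nat A)).1 /\
  fourier (@Qfun R a n) A = (coefPQ a n (set_nat A)).2.
Proof.
have PQ_walsh (d : {ffun 'I_n -> bool}) : PQ a n (ext d) =
    (\sum_B (coefPQ a n (set_nat B)).1 * walsh R B d,
     \sum_B (coefPQ a n (set_nat B)).2 * walsh R B d).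
  have sub_lt_n (B : {set 'I_n}) : B \subset set_lt n.
    by apply/subsetP => i _; rewrite inE ltn_ord.
  by rewrite (PQ_walsh_expansion d (leqnn n)) !(eq_bigl _ _ sub_lt_n).
split; [apply: (fourier_sum_walsh (c := fun B => (coefPQ a n (set_nat B)).1))
      | apply: (fourier_sum_walsh (c := fun B => (coefPQ a n (set_nat B)).2))].
all: by move=> d; rewrite /Pfun /Qfun PQ_walsh.
Qed.

Lemma fourier_PQ_sqr (A : {set 'I_n}) :
  fourier (@Pfun R a n) A ^+ 2 = \prod_(i in A) a i.+1 ^+ 2 /\
  fourier (@Qfun R a n) A ^+ 2 = \prod_(i in A) a i.+1 ^+ 2.
Proof.
have prod_set_nat : \prod_(k < n | set_nat A k) a k.+1 ^+ 2 = \prod_(i in A) a i.+1 ^+ 2.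
  by apply: eq_bigl => i; rewrite set_natE.
have [sqr1 sqr2] := coefPQ_sqr a n (set_nat A).
by have [-> ->] := fourier_PQ A; rewrite sqr1 sqr2 prod_set_nat.
Qed.

End Expansion.

Theorem proposition3 (R : realType) (a : nat -> R)
  (ha : forall k : nat, (1 <= k)%N -> 0 < a k <= 1)
  (n : nat) (hn : (1 <= n)%N) :
  fentropy (@Pfun R a n) =
    - \sum_(1 <= i < n.+1)
        (\prod_(1 <= j < n.+1 | j != i) (1 + a j ^+ 2)) * (a i ^+ 2 * log2 (a i ^+ 2))
  /\
  fentropy (@Qfun R a n) =
    - \sum_(1 <= i < n.+1)
        (\prod_(1 <= j < n.+1 | j != i) (1 + a j ^+ 2)) * (a i ^+ 2 * log2 (a i ^+ 2)).
Proof.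
have a2_gt0 (i : 'I_n) : 0 < a i.+1 ^+ 2.
  by have /andP[a_gt0 _] := ha i.+1 isT; exact: exprn_gt0.
have -> : \sum_(1 <= i < n.+1)
      (\prod_(1 <= j < n.+1 | j != i) (1 + a j ^+ 2)) * (a i ^+ 2 * log2 (a i ^+ 2)) =
    \sum_(i < n) (\prod_(j | j != i) (1 + a j.+1 ^+ 2)) * (a i.+1 ^+ 2 * log2 (a i.+1 ^+ 2)).
  rewrite big_add1 big_mkord; apply: eq_bigr => i _; rewrite big_add1 big_mkord.
  by congr (_ * _); apply: eq_bigl => j.
rewrite -(sum_xlogx_prod_set a2_gt0) /fentropy.
split; congr (- _); apply: eq_bigr => A _.
  by rewrite (fourier_PQ_sqr a A).1.
by rewrite (fourier_PQ_sqr a A).2.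
Qed.
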